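(* For any $\ell,h\in\mathbb{N}$ there is $C>0$ such that the following holds. If $\mathcal{H}$ is an $\ell$-configuration of size $h$, $\varepsilon\in(0,1)$, and $\mathcal{F}_1,\dots,\mathcal{F}_h\subset[m]^n$ each satisfy $\mu(\mathcal{F}_i)>\varepsilon$, where $n>C\log(\varepsilon^{-1})$ and $m>2hn/\varepsilon$, then $\mathcal{F}_1,\dots,\mathcal{F}_h$ cross contain $\mathcal{H}$.
   Context: $\mu$ is the uniform probability measure on $[m]^n$. An $\ell$-configuration is a multiset $\mathcal{H}=\{e_1,\dots,e_h\}$ of $\ell$-element edges on a finite vertex set partitioned into parts $U_1,\dots,U_\ell$, each edge having exactly one vertex in each part; its size is $h$. $\mathcal{F}_1,\dots,\mathcal{F}_h$ cross contain $\mathcal{H}$ if there are $x^j\in\mathcal{F}_j$ ($j\in[h]$) and an injection $\Phi:[\ell]\to[n]$ such that for all distinct $j,j'\in[h]$ and all $i\in[n]$: $x^j_i=x^{j'}_i$ holds exactly when $i=\Phi(k)$ for some $k\in[\ell]$ with $e_j\cap e_{j'}\cap U_k\neq\emptyset$. *)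

From mathcomp Require Import all_boot.
From Stdlib Require Import Reals.

Set Implicit Arguments.
Unset Strict Implicit.
Unset Printing Implicit Defensive.

(* [m]^n is represented as {ffun 'I_n -> 'I_m} (coordinates indexed by 'I_n,
   values in 'I_m = {0,..,m-1}). *)
Definition cube (m n : nat) := {ffun 'I_n -> 'I_m}.

Definition mu (m n : nat) (F : {set cube m n}) : R :=
  (INR #|F| / INR (m ^ n)%nat)%R.

(* An l-configuration of size h: edges e_0,..,e_{h-1}; the vertex of edge e_j
   in part U_k is encoded by the label [H j k : nat] (vertices of different
   parts are distinct since parts are disjoint; vertices of U_k are labelled
   by naturals).  Thus e_j /\ e_j' /\ U_k <> empty  iff  H j k = H j' k.
   Repeated edges (multiset) are allowed. *)
Definition configuration (l h : nat) := 'I_h -> 'I_l -> nat.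

Definition cross_contain (l h m n : nat) (H : configuration l h)
    (F : 'I_h -> {set cube m n}) : Prop :=
  exists (x : 'I_h -> cube m n) (Phi : 'I_l -> 'I_n),
    (forall j, x j \in F j) /\ injective Phi /\
    (forall j j' : 'I_h, j != j' -> forall i : 'I_n,
        x j i = x j' i <-> exists k : 'I_l, i = Phi k /\ H j k = H j' k).

From mathcomp Require Import all_boot.
From Stdlib Require Import Reals Lra Psatz.
From mathcomp Require Import zify.
Import ssrnat.

Set Implicit Arguments.
Unset Strict Implicit.
Unset Printing Implicit Defensive.

(* The vectors x^1, ..., x^h are built one coordinate at a time, keeping track for
   every j of the number of elements of F_j that extend the prefix of x^j.  A
   coordinate either becomes the next pattern coordinate Phi(k), where the values
   of the x^j are an injective relabelling of the vertices of the e_j in U_k taken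
   among values that are good for all j at once, or it receives pairwise distinct
   values.  Once Phi is complete, the remaining coordinates get distinct values
   greedily, which is possible since every F_j keeps relative density about hn/m.
   If n is small, n > C log(1/eps) forces eps close to 1 and a Markov bound lets
   the first l coordinates be the pattern coordinates.  Otherwise, whenever fewer
   than h values are good for all j, some F_j has a value raising its relative
   density by a factor 1 + 1/K while every other F_j loses at most a factor
   1 - 2/n; a density being at most 1, this happens only O(K log(1/eps)) times for
   each j, so the pattern is completed before the coordinates run out. *)

Section PrefixCount.
Variables m n : nat.
Implicit Types (F : {set cube m n}) (w x : cube m n) (t : nat).

Definition agree_prefix t x w := [forall i : 'I_n, (i < t) ==> (x i == w i)].

Definition prefix_count F w t := #|[set x in F | agree_prefix t x w]|.

Definition set_coord w t (a : 'I_m) : cube m n :=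
  [ffun i => if val i == t then a else w i].

Lemma agree_prefixS t x w (ht : t < n) :
  agree_prefix t.+1 x w = agree_prefix t x w && (x (Ordinal ht) == w (Ordinal ht)).
Proof.
apply/forallP/andP => [agr | [/forallP agr /eqP xt] i].
  split; last by have := agr (Ordinal ht); rewrite /= ltnSn.
  by apply/forallP => i; apply/implyP => lt_it; have /implyP := agr i; apply; apply: ltnW.
apply/implyP; rewrite ltnS leq_eqVlt => /orP[/eqP it|]; last exact: (implyP (agr i)).
by rewrite (_ : i = Ordinal ht) ?xt //; apply: val_inj.
Qed.

Lemma agree_prefix_set_coord t x w a (ht : t < n) :
  agree_prefix t.+1 x (set_coord w t a) = agree_prefix t x w && (x (Ordinal ht) == a).
Proof.
rewrite agree_prefixS ffunE eqxx; congr (_ && _); apply: eq_forallb => i.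
by rewrite ffunE; case: ltngtP.
Qed.

Lemma prefix_count_split F w t (ht : t < n) :
  prefix_count F w t = \sum_a prefix_count F (set_coord w t a) t.+1.
Proof.
rewrite /prefix_count -sum1_card (partition_big (fun x : cube m n => x (Ordinal ht)) predT) //=.
apply: eq_bigr => a _; rewrite -sum1_card; apply: eq_bigl => x.
by rewrite !inE agree_prefix_set_coord andbA.
Qed.

Lemma prefix_count_setT w t : t <= n -> prefix_count setT w t = m ^ (n - t).
Proof.
move=> le_tn; move def_d: (n - t) => d; elim: d t w le_tn def_d => [|d IH] t w le_tn def_d.
  have -> : t = n by lia.
  rewrite expn0; apply/eqP/cards1P; exists w; apply/setP => x; rewrite !inE.
  apply/forallP/eqP => [agr | -> i]; last by rewrite eqxx implybT.
  by apply/ffunP => i; have /implyP := agr i; rewrite ltn_ord => /(_ isT)/eqP.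
have ht : t < n by lia.
rewrite (prefix_count_split _ _ ht) (eq_bigr (fun _ => m ^ d)).
  by rewrite sum_nat_const card_ord expnS.
by move=> a _; apply: IH; lia.
Qed.

Lemma prefix_count_le F w t : t <= n -> prefix_count F w t <= m ^ (n - t).
Proof.
move=> le_tn; rewrite -(prefix_count_setT w le_tn); apply: subset_leq_card.
by apply/subsetP => x; rewrite !inE => /andP[_ ->].
Qed.

Lemma prefix_count0 F w : prefix_count F w 0 = #|F|.
Proof. by apply: eq_card => x; rewrite !inE; case: (x \in F) => //; apply/forallP. Qed.

Lemma prefix_count_gt0_mem F w : 0 < prefix_count F w n -> w \in F.
Proof.
case/card_gt0P => x; rewrite !inE => /andP[xF /forallP agr].
suff <- : x = w by [].
by apply/ffunP => i; have /implyP := agr i; rewrite ltn_ord => /(_ isT)/eqP.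
Qed.

End PrefixCount.

Section Counting.
Variable T : finType.
Implicit Types (A B : {set T}) (c : T -> nat).

Lemma distinct_representatives k (A : 'I_k -> {set T}) B :
  (forall j, k + #|B| <= #|A j|) ->
  exists v : 'I_k -> T, injective v /\ forall j, v j \in A j :\: B.
Proof.
elim: k A B => [|k IH] A B large_A.
  by exists (fun j : 'I_0 => False_rect T (notF (ltn_ord j))); split => -[].
have : 0 < #|A ord0 :\: B|.
  by rewrite cardsD; have := large_A ord0; have := subset_leq_card (subsetIr (A ord0) B); lia.
case/card_gt0P => x0 x0A.
have [|v [inj_v vA]] := IH (A \o lift ord0) (x0 |: B).
  move=> j; have := large_A (lift ord0 j); rewrite cardsU1 /=.
  by case: (x0 \in B); lia.
exists (fun j => if unlift ord0 j is Some j' then v j' else x0); split.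
  move=> j1 j2; case: unliftP => [j1' ->|->]; case: unliftP => [j2' ->|->] //.
  - by move/inj_v ->.
  - by move=> v_x0; have := vA j1'; rewrite v_x0 !inE eqxx.
  - by move=> x0_v; have := vA j2'; rewrite -x0_v !inE eqxx.
move=> j; case: unliftP => [j' ->|-> //].
by have := vA j'; rewrite !inE negb_or => /andP[/andP[_ ->] ->].
Qed.

Lemma distinct_representatives_with k (A : 'I_k -> {set T}) (j0 : 'I_k) (b : T) :
  (forall j, k < #|A j|) ->
  exists v : 'I_k -> T, [/\ injective v, v j0 = b & forall j, j != j0 -> v j \in A j].
Proof.
move=> large_A; have [|v [inj_v vA]] := distinct_representatives (B := [set b]) (A := A).
  by move=> j; rewrite cards1 addn1.
have v_b j : v j != b by have := vA j; rewrite !inE => /andP[].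
exists (fun j => if j == j0 then b else v j); split => [j1 j2||j /negbTE ->]; last 2 first.
- by rewrite eqxx.
- by have := vA j; rewrite inE => /andP[].
case: eqP => [->|_]; case: eqP => [->|_] //; last exact: inj_v.
  by move=> b_v; have := v_b j2; rewrite b_v eqxx.
by move=> v_b'; have := v_b j1; rewrite v_b' eqxx.
Qed.

Lemma card_forall_complement (I : finType) (P : I -> T -> bool) :
  #|T| <= #|[set a | [forall j, P j a]]| + \sum_j #|[set a | ~~ P j a]|.
Proof.
rewrite -(cardsC [set a | [forall j, P j a]]) leq_add2l.
apply: leq_trans (_ : #|\bigcup_j [set a | ~~ P j a]| <= _).
  apply: subset_leq_card; apply/subsetP => a; rewrite !inE negb_forall => /existsP[j Pja].
  by apply/bigcupP; exists j; rewrite ?inE.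
apply: (big_ind2 (fun (U : {set T}) s => (#|U| <= s : Prop))) => [|U1 s1 U2 s2 le1 le2|//].
  by rewrite cards0.
exact: leq_trans (leq_card_setU _ _) (leq_add le1 le2).
Qed.

Lemma exists_many_bad (I : finType) (P : I -> T -> bool) :
  #|[set a | [forall j, P j a]]| < #|I| ->
  exists j, #|T| < #|I| * #|[set a | ~~ P j a]| + #|I|.
Proof.
move=> few_good; apply/existsP; apply: contraLR few_good; rewrite negb_exists -leqNgt.
move=> /forallP few_bad; have [j _|I0] := pickP (@predT I); last by rewrite (eq_card0 I0).
have I_gt0 : 0 < #|I| by apply/card_gt0P; exists j.
have sum_const (s : nat) : \sum_(i : I) s = #|I| * s by rewrite sum_nat_const.
have : \sum_i (#|I| * #|[set a | ~~ P i a]| + #|I|) <= #|I| * #|T|.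
  by rewrite -sum_const; apply: leq_sum => i _; rewrite leqNgt; apply: few_bad.
rewrite big_split /= -big_distrr /= sum_const -mulnDr leq_pmul2l //.
move=> le_sum; rewrite -(leq_add2r (\sum_i #|[set a | ~~ P i a]|)) addnC.
exact: leq_trans le_sum (card_forall_complement P).
Qed.

Lemma sum_setC A c : \sum_a c a = \sum_(a in A) c a + \sum_(a in ~: A) c a.
Proof. by rewrite (bigID (mem A)) /=; congr (_ + _); apply: eq_bigl => a; rewrite inE. Qed.

Lemma card_mean_lower_gt k S c :
  k < #|T| -> (forall a, c a <= S) -> k * S <= \sum_a c a ->
  k < #|[set a | \sum_b c b <= #|T| * c a + k * S]|.
Proof.
move=> lt_kT le_cS le_kS; set A := [set a | _]; set D := \sum_b c b.
rewrite ltnNge; apply/negP => small_A.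
have cardA := cardsC A.
have sumA : \sum_(a in A) #|T| * c a <= #|A| * (#|T| * S).
  by rewrite -sum_nat_const; apply: leq_sum => a _; rewrite leq_mul2l le_cS orbT.
have sumCA : \sum_(a in ~: A) #|T| * c a + #|~: A| * (k * S + 1) <= #|~: A| * D.
  by rewrite -!sum_nat_const -big_split /=; apply: leq_sum => a; rewrite !inE -ltnNge addnA addn1.
have : #|T| * D = \sum_(a in A) #|T| * c a + \sum_(a in ~: A) #|T| * c a.
  by rewrite big_distrr -sum_setC.
have : #|A| * (k * S) <= #|A| * D by rewrite leq_mul2l le_kS orbT.
have : #|A| * (#|T| * S) <= k * (#|T| * S) by rewrite leq_mul2r small_A orbT.
have : #|T| * D = #|A| * D + #|~: A| * D by rewrite -mulnDl cardA.
have : k * (#|T| * S) = #|A| * (k * S) + #|~: A| * (k * S).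
  by rewrite -mulnDl cardA mulnCA.
lia.
Qed.

Lemma card_markov_lt K c :
  0 < #|T| -> #|[set a | K * \sum_b c b < #|T| * c a]| * K < #|T|.
Proof.
move=> T_gt0; set D := \sum_b c b; set B := [set a | _].
have le_B : #|B| * (K * D + 1) <= #|T| * D.
  rewrite -sum_nat_const; apply: leq_trans (_ : \sum_(a in B) #|T| * c a <= _).
    by apply: leq_sum => a; rewrite inE addn1.
  by rewrite /D big_distrr (sum_setC B) leq_addr.
have [D0|D_gt0] := posnP D.
  by move: le_B; rewrite D0 !muln0 add0n muln1 leqn0 => /eqP ->; rewrite mul0n.
have [->|B_gt0] := posnP #|B|; first by rewrite mul0n.
by rewrite -(ltn_pmul2r D_gt0) -mulnA; move: le_B; rewrite mulnDr muln1; lia.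
Qed.

Lemma card_common_good (I : finType) (d : I -> T -> nat) :
  2 * #|I| < #|T| ->
  #|I| <= #|[set a | [forall j, #|T| * d j a <= 2 * #|I| * \sum_b d j b]]|.
Proof.
move=> large_T; have [-> //|I_gt0] := posnP #|I|.
pose P j a := #|T| * d j a <= 2 * #|I| * \sum_b d j b.
have few_bad j : #|[set a | ~~ P j a]| * (2 * #|I|) < #|T|.
  rewrite (eq_card (B := [set a | 2 * #|I| * \sum_b d j b < #|T| * d j a])) => [|a].
    by apply: card_markov_lt; lia.
  by rewrite !inE -ltnNge.
have sum_const (s : nat) : \sum_(i : I) s = #|I| * s by rewrite sum_nat_const.
have : #|I| * (2 * \sum_j #|[set a | ~~ P j a]|) <= #|I| * (#|T| - 1).
  rewrite mulnCA mulnA mulnC big_distrl -sum_const.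
  by apply: leq_sum => j _; rewrite subn1 -ltnS prednK; [exact: few_bad | lia].
rewrite leq_pmul2l // => le_bad; rewrite -(leq_add2r (\sum_j #|[set a | ~~ P j a]|)).
apply: leq_trans (card_forall_complement P); lia.
Qed.

Lemma max_gain k M c b :
  0 < M -> (forall a, c a <= c b) -> 0 < \sum_a c a -> 2 * k <= #|T| ->
  #|T| < k * #|[set a | ~~ ((M - 1) * \sum_b c b <= M * #|T| * c a)]| + k ->
  (2 * k * M + 1) * \sum_a c a <= 2 * k * M * #|T| * c b.
Proof.
move=> M_gt0 max_b D_gt0 le_kT; set D := \sum_a c a; set B := [set a | _] => many_B.
rewrite leqNgt; apply/negP => small_b.
have sumB : \sum_(a in B) 2 * k * (M * #|T| * c a) <= #|B| * (2 * k * ((M - 1) * D)).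
  rewrite -sum_nat_const; apply: leq_sum => a; rewrite inE -ltnNge => /ltnW lt_a.
  by rewrite leq_mul2l lt_a orbT.
have sumCB : \sum_(a in ~: B) 2 * k * M * #|T| * c a <= #|~: B| * ((2 * k * M + 1) * D).
  rewrite -sum_nat_const; apply: leq_sum => a _.
  by apply: leq_trans (ltnW small_b); rewrite leq_mul2l max_b orbT.
have splitD : 2 * k * M * #|T| * D = \sum_(a in B) 2 * k * (M * #|T| * c a)
                               + \sum_(a in ~: B) 2 * k * M * #|T| * c a.
  rewrite big_distrr /= (sum_setC B); congr (_ + _); apply: eq_bigr => a _; lia.
have cardB := cardsC B.
have : 2 * k * M * #|T| <= #|B| * (2 * k * (M - 1)) + #|~: B| * (2 * k * M + 1).
  rewrite -(leq_pmul2r D_gt0) mulnDl.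
  have : 2 * k * M * #|T| * D <= #|B| * (2 * k * ((M - 1) * D)) + #|~: B| * ((2 * k * M + 1) * D).
    lia.
  by rewrite !mulnA.
rewrite -cardB; have -> : M = (M - 1) + 1 by lia.
rewrite addnK; nia.
Qed.

End Counting.

Lemma exists_relabelling (I T : finType) (X : eqType) (f : I -> X) (G : {set T}) :
  #|I| <= #|G| ->
  exists g : I -> T, (forall i, g i \in G) /\ (forall i i', g i = g i' <-> f i = f i').
Proof.
move=> le_IG; pose s := [seq f i | i <- enum I].
have f_s i : f i \in s by rewrite map_f ?mem_enum.
have idx_lt i : index (f i) s < #|G|.
  by apply: leq_trans le_IG; rewrite cardE -(size_map f) index_mem.
exists (fun i => enum_val (Ordinal (idx_lt i))); split => [i|i i']; first exact: enum_valP.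
split => [/enum_val_inj/(congr1 val)/= eq_idx | eq_f].
  by rewrite -(nth_index (f i) (f_s i)) eq_idx nth_index.
by congr enum_val; apply: val_inj; rewrite /= eq_f.
Qed.

Section PartialCopy.
Variables (l h m n : nat) (H : configuration l h).
Implicit Types (w : 'I_h -> cube m n) (Phi : 'I_l -> 'I_n) (t k : nat).

Definition partial_copy t k w Phi :=
  [/\ forall k' : 'I_l, k' < k -> Phi k' < t,
      {in [pred k' : 'I_l | k' < k] &, injective Phi} &
      forall (j j' : 'I_h) (i : 'I_n), j != j' -> i < t ->
        (w j i = w j' i <-> exists2 k' : 'I_l, k' < k & i = Phi k' /\ H j k' = H j' k')].

Lemma partial_copy0 w Phi : partial_copy 0 0 w Phi.
Proof. by split. Qed.

Lemma partial_copy_cross_contain (F : 'I_h -> {set cube m n}) w Phi :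
  partial_copy n l w Phi -> (forall j, w j \in F j) -> cross_contain H F.
Proof.
case=> _ inj_Phi copy_w wF; exists w, Phi; split => //; split.
  by move=> k1 k2; apply: inj_Phi; rewrite inE ltn_ord.
move=> j j' neq_j i; rewrite copy_w // ?ltn_ord //.
by split => [[k' _ ?] | [k' ?]]; exists k'; rewrite ?ltn_ord.
Qed.

Lemma partial_copy_distinct t k w Phi (v : 'I_h -> 'I_m) (ht : t < n) :
  injective v -> partial_copy t k w Phi ->
  partial_copy t.+1 k (fun j => set_coord (w j) t (v j)) Phi.
Proof.
move=> inj_v [Phi_lt inj_Phi copy_w]; split => // [k' /Phi_lt /ltnW //|j j' i neq_j].
rewrite !ffunE ltnS leq_eqVlt; case: eqP => [it _ | _ /copy_w ->] //.
split=> [/inj_v eq_j | [k' /Phi_lt + [i_Phi _]]]; first by rewrite eq_j eqxx in neq_j.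
by rewrite -i_Phi it ltnn.
Qed.

Lemma partial_copy_pattern t k w Phi (G : {set 'I_m}) (ht : t < n) (hk : k < l) :
  h <= #|G| -> partial_copy t k w Phi ->
  exists (a : 'I_h -> 'I_m) (Phi' : 'I_l -> 'I_n),
    (forall j, a j \in G) /\ partial_copy t.+1 k.+1 (fun j => set_coord (w j) t (a j)) Phi'.
Proof.
move=> large_G [Phi_lt inj_Phi copy_w]; pose k0 : 'I_l := Ordinal hk.
have [|a [aG code_a]] := exists_relabelling (fun j => H j k0) (G := G); first by rewrite card_ord.
pose Phi' (k' : 'I_l) := if k' == k0 then Ordinal ht else Phi k'.
have old (k' : 'I_l) : k' < k.+1 -> k' != k0 -> k' < k.
  by rewrite ltnS leq_eqVlt => /orP[/eqP k'k /eqP[]|//]; apply: val_inj.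
exists a, Phi'; split => //; split => [k' lt_k'|k1 k2|j j' i neq_j].
- by rewrite /Phi'; case: eqP => [//|/eqP /(old _ lt_k') /Phi_lt /ltnW].
- rewrite !inE /Phi' => lt1 lt2; case: eqP => [->|/eqP n1]; case: eqP => [->|/eqP n2] //.
  + by move=> /(congr1 val) /= eq_t; have := Phi_lt _ (old _ lt2 n2); rewrite -eq_t ltnn.
  + by move=> /(congr1 val) /= eq_t; have := Phi_lt _ (old _ lt1 n1); rewrite eq_t ltnn.
  + by apply: inj_Phi; rewrite inE; apply: old.
rewrite !ffunE ltnS leq_eqVlt; case: eqP => [it _ | ni /copy_w -> //].
  rewrite code_a; split=> [eq_H | [k' lt_k' [i_Phi eq_H]]].
    by exists k0 => //; rewrite /Phi' eqxx; split => //; apply: val_inj.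
  move: i_Phi; rewrite /Phi'; case: eqP => [<- //|/eqP n' i_Phi].
  by have := Phi_lt _ (old _ lt_k' n'); rewrite -i_Phi it ltnn.
split=> [[k' lt_k' [i_Phi eq_H]] | [k' lt_k' [i_Phi eq_H]]]; exists k' => //.
- by apply: ltnW.
- by rewrite /Phi'; case: eqP => [eq_k'|]; [move: lt_k'; rewrite eq_k' ltnn | ].
- move: i_Phi; rewrite /Phi'; case: eqP => [_ it|/eqP n' ?]; first by case: ni; rewrite it.
  exact: old.
- by move: i_Phi; rewrite /Phi'; case: eqP => [_ it|//]; case: ni; rewrite it.
Qed.

End PartialCopy.

Lemma prefix_count_good_values m n (F : {set cube m n}) w t k (ht : t < n) :
  k < m -> k * m ^ (n - t.+1) <= prefix_count F w t ->
  k < #|[set a | prefix_count F w t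
                   <= m * prefix_count F (set_coord w t a) t.+1 + k * m ^ (n - t.+1)]|.
Proof.
move=> lt_km large_F.
have := card_mean_lower_gt (k := k) (S := m ^ (n - t.+1))
  (c := fun a => prefix_count F (set_coord w t a) t.+1).
rewrite card_ord -(prefix_count_split _ _ ht); apply=> // a; exact: prefix_count_le ht.
Qed.

Lemma expn_subS m n t : t < n -> m ^ (n - t) = m * m ^ (n - t.+1).
Proof. by move=> ht; rewrite -expnS subnSK. Qed.

Lemma distinct_completion l h m n (H : configuration l h) (F : 'I_h -> {set cube m n}) t w Phi :
  h < m -> t <= n -> partial_copy H t l w Phi ->
  (forall j, m ^ (n - t) * ((n - t) * h) < m * prefix_count (F j) (w j) t) ->
  cross_contain H F.
Proof.
move=> lt_hm; move def_d: (n - t) => d; elim: d t w def_d => [|d IH] t w def_d le_tn copy_w large_F.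
  have eq_tn : t = n by lia.
  rewrite eq_tn in copy_w large_F; apply: (partial_copy_cross_contain copy_w) => j.
  by apply: prefix_count_gt0_mem; have := large_F j; rewrite muln0 muln_gt0 => /andP[].
have ht : t < n by lia.
have def_d' : n - t.+1 = d by lia.
have m_gt0 : 0 < m by lia.
pose A j := [set a | prefix_count (F j) (w j) t
                      <= m * prefix_count (F j) (set_coord (w j) t a) t.+1 + h * m ^ d].
have large_c j : m * (m ^ d * (d * h)) + m * (h * m ^ d) < m * prefix_count (F j) (w j) t.
  by have := large_F j; rewrite expnS; nia.
have [|v [inj_v vA]] := distinct_representatives (A := A) (B := set0).
  move=> j; rewrite cards0 addn0 /A -def_d'; apply/ltnW/prefix_count_good_values => //.
  by have := large_c j; rewrite def_d' -mulnDr ltn_pmul2l //; lia.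
apply: (IH t.+1 _ def_d' _ (partial_copy_distinct ht inj_v copy_w)) => [//|j].
rewrite -(ltn_pmul2l m_gt0); have := vA j; rewrite setD0 inE -(leq_pmul2l m_gt0) mulnDr.
by have := large_c j; lia.
Qed.

Section DenseRegime.
Variables (l h m n : nat) (H : configuration l h) (F : 'I_h -> {set cube m n}).
Hypotheses (large_m : 2 * h * n < m) (n_gt0 : 0 < n) (le_ln : l <= n).

Definition dense_invariant k w Phi :=
  partial_copy H k k w Phi /\
  forall j, m ^ k * (m ^ (n - k) - prefix_count (F j) (w j) k) <= (2 * h) ^ k * (m ^ n - #|F j|).

Lemma dense_invariant_step k w Phi : k < l -> dense_invariant k w Phi ->
  exists w' Phi', dense_invariant k.+1 w' Phi'.
Proof.
move=> lt_kl [copy_w small_w]; have ht : k < n by lia.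
set S := m ^ (n - k.+1); pose cc j a := prefix_count (F j) (set_coord (w j) k a) k.+1.
have le_ccS j a : cc j a <= S by apply: prefix_count_le.
have sum_def j : \sum_a (S - cc j a) = m ^ (n - k) - prefix_count (F j) (w j) k.
  by rewrite sumnB // sum_nat_const card_ord (prefix_count_split _ _ ht) (expn_subS _ ht).
have two_h : 2 * #|'I_h| < #|'I_m| by rewrite !card_ord; nia.
have := card_common_good (fun (j : 'I_h) a => S - cc j a) two_h; rewrite !card_ord.
case/(partial_copy_pattern ht lt_kl)/(_ copy_w) => a [Phi' [aG copy']].
exists (fun j => set_coord (w j) k (a j)), Phi'; split => // j.
have := aG j; rewrite inE => /forallP/(_ j); rewrite sum_def => good_a.
have step : m ^ k.+1 * (S - cc j (a j))
             <= 2 * h * (m ^ k * (m ^ (n - k) - prefix_count (F j) (w j) k)).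
  by rewrite expnS mulnAC mulnC [X in _ <= X]mulnCA leq_mul2l good_a orbT.
by apply: leq_trans step _; rewrite expnS -(mulnA (2 * h)) leq_mul2l small_w orbT.
Qed.

Hypothesis dense_F : forall j, 2 * (2 * h) ^ l * (m ^ n - #|F j|) <= m ^ n.

Lemma dense_invariant_cross_contain w Phi : dense_invariant l w Phi -> cross_contain H F.
Proof.
case=> copy_w small_w; have m_gt0 : 0 < m by lia.
apply: (distinct_completion _ _ copy_w) => [|//|j]; first by nia.
set P := m ^ (n - l); set c := prefix_count (F j) (w j) l.
have le_P : P <= 2 * c.
  have : m ^ l * (2 * (P - c)) <= m ^ l * P.
    rewrite -expnD subnKC // mulnCA; apply: leq_trans (dense_F j).
    by rewrite -mulnA leq_mul2l small_w orbT.
  by rewrite leq_pmul2l ?expn_gt0 ?m_gt0 //; lia.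
have P_gt0 : 0 < P by rewrite expn_gt0 m_gt0.
apply: (@leq_ltn_trans (2 * c * ((n - l) * h))); first by rewrite leq_mul2r le_P orbT.
have c_gt0 : 0 < c by lia.
apply: (@leq_ltn_trans (2 * h * n * c)); last by rewrite ltn_pmul2r.
rewrite mulnC -!mulnA; apply: leq_trans (leq_mul (leq_subr l n) (leqnn _)) _; lia.
Qed.

Lemma dense_regime : cross_contain H F.
Proof.
have m_gt0 : 0 < m by lia.
suff /(_ l (leqnn l)) [w [Phi]] : forall k, k <= l -> exists w Phi, dense_invariant k w Phi.
  exact: dense_invariant_cross_contain.
elim=> [|k IH] le_kl.
  exists (fun _ => [ffun _ => Ordinal m_gt0]), (widen_ord le_ln); split=> [|j].
    exact: partial_copy0.
  by rewrite prefix_count0 subn0 !expn0 !mul1n.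
by have [w [Phi]] := IH (ltnW le_kl); apply: dense_invariant_step.
Qed.

End DenseRegime.

Section RealFacts.
Local Open Scope R_scope.

Lemma INR_leq (a b : nat) : (a <= b)%N -> INR a <= INR b.
Proof. by move/leP; apply: le_INR. Qed.

Lemma INR_ltn (a b : nat) : (a < b)%N -> INR a < INR b.
Proof. by move/ltP; apply: lt_INR. Qed.

Lemma leq_INR (a b : nat) : INR a <= INR b -> (a <= b)%N.
Proof. by move/INR_le/leP. Qed.

Lemma ltn_INR (a b : nat) : INR a < INR b -> (a < b)%N.
Proof. by move/INR_lt/ltP. Qed.

Lemma INR_subn (a b : nat) : (b <= a)%N -> INR (a - b) = INR a - INR b.
Proof. by move/leP; apply: minus_INR. Qed.

Lemma natpow_expn (a k : nat) : Nat.pow a k = (a ^ k)%N.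
Proof. by elim: k => // k IH; rewrite expnS -IH. Qed.

Lemma scale_transfer (m S c c' p q : nat) (x : R) :
  (0 < m)%N -> (0 < q)%N -> (p * c <= q * m * c')%N ->
  INR (m * S) * x <= INR c -> INR S * (INR p / INR q * x) <= INR c'.
Proof.
move=> /INR_ltn /= m_gt0 /INR_ltn /= q_gt0 /INR_leq; rewrite !mult_INR => le_c le_x.
apply: (Rmult_le_reg_l (INR q * INR m)); first by nra.
have -> : INR q * INR m * (INR S * (INR p / INR q * x)) = INR p * (INR m * INR S * x).
  by field; lra.
by apply: Rle_trans le_c; apply: Rmult_le_compat_l (pos_INR p) le_x.
Qed.

Lemma sub_transfer (m S c c' r : nat) (x : R) :
  (0 < m)%N -> (c <= m * c' + r * S)%N ->
  INR (m * S) * x <= INR c -> INR S * (x - INR r / INR m) <= INR c'.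
Proof.
move=> /INR_ltn /= m_gt0 /INR_leq; rewrite plus_INR !mult_INR => le_c le_x.
apply: (Rmult_le_reg_l (INR m)) => //.
have -> : INR m * (INR S * (x - INR r / INR m)) = INR m * INR S * x - INR r * INR S.
  by field; lra.
lra.
Qed.

Lemma rel_sub_transfer (m S c c' r n : nat) (x : R) :
  (0 < m)%N -> (2 <= n)%N -> (c <= m * c' + r * S)%N -> (r * S * n <= 2 * c)%N ->
  INR (m * S) * x <= INR c -> INR S * ((1 - 2 / INR n) * x) <= INR c'.
Proof.
move=> /INR_ltn /= m_gt0 /INR_leq /= n_ge2 /INR_leq + /INR_leq.
rewrite plus_INR !mult_INR /= => le_c le_rS le_x.
apply: (Rmult_le_reg_l (INR m * INR n)); first by nra.
have -> : INR m * INR n * (INR S * ((1 - 2 / INR n) * x)) = (INR n - 2) * (INR m * INR S * x).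
  by field; lra.
apply: Rle_trans (_ : (INR n - 2) * INR c <= _); first by apply: Rmult_le_compat_l; lra.
nra.
Qed.

Lemma one_sub_pow_ge (x : R) (k : nat) : 0 <= x <= 1 -> 1 - INR k * x <= (1 - x) ^ k.
Proof.
move=> x01; elim: k => [|k IH]; first by rewrite /=; lra.
rewrite S_INR /=; have := pos_INR k; have : 0 <= 1 - x by lra.
move=> x1 k0; have := Rmult_le_compat_l _ _ _ x1 IH; nra.
Qed.

Lemma exp_half_le_one_add (x : R) : 0 <= x <= 1 -> exp (x / 2) <= 1 + x.
Proof.
move=> x01; have := exp_ineq1_le (- (x / 2)); rewrite exp_Ropp.
have := exp_pos (x / 2); move: (exp (x / 2)) => e e_gt0.
rewrite -(Rmult_1_l (/ e)) => le_inv; apply: (Rmult_le_reg_r (/ e)); first exact: Rinv_0_lt_compat.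
rewrite Rinv_r; nra.
Qed.

Lemma exp_le_one_sub (x : R) : 0 <= x <= / 2 -> exp (- (2 * x)) <= 1 - x.
Proof.
move=> x_half; have := exp_ineq1_le (2 * x); have := exp_pos (2 * x).
rewrite exp_Ropp; move: (exp (2 * x)) => e e_gt0 le_e.
apply: (Rmult_le_reg_r e) => //; rewrite Rinv_l; nra.
Qed.

Lemma exp_INR_mul (k : nat) (x : R) : exp (INR k * x) = exp x ^ k.
Proof.
elim: k => [|k IH]; first by rewrite /= Rmult_0_l exp_0.
by rewrite S_INR Rmult_plus_distr_r Rmult_1_l exp_plus IH /= Rmult_comm.
Qed.

Lemma exp_INR_mul_le (a x : R) (k : nat) : exp x <= a -> exp (INR k * x) <= a ^ k.
Proof. by move=> le_a; rewrite exp_INR_mul; apply: pow_incr; split; [left; apply: exp_pos|]. Qed.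

End RealFacts.

Definition pattern_rate (h l : nat) := 4 * h * l.+1.
Definition gain_rate (h l : nat) := 2 * h * pattern_rate h l.
Definition sparse_threshold (h l : nat) := 2 * l + 20 * h * gain_rate h l + 8.
(* The successor keeps the constant positive when h = 0 < l. *)
Definition cross_constant (h l : nat) :=
  (4 * h * gain_rate h l + 2 * sparse_threshold h l * (2 * h) ^ l).+1.

Local Open Scope R_scope.

Section SparseRegime.
Variables (l h m n : nat) (H : configuration l h) (F : 'I_h -> {set cube m n}) (eps : R).
Hypotheses (eps01 : 0 < eps < 1) (h_gt0 : (0 < h)%N) (le_ln : (l <= n)%N)
  (large_m : 2 * INR h * INR n < INR m * eps) (large_n : (sparse_threshold h l <= n)%N)
  (long_n : INR (4 * h * gain_rate h l) * ln (/ eps) < INR n)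
  (dense_F : forall j, INR (m ^ n) * eps <= INR #|F j|).

Local Notation M := (pattern_rate h l).
Local Notation K := (gain_rate h l).

Definition pattern_factor := INR (M - 1) / INR M.
Definition gain_factor := INR (K + 1) / INR K.
Definition distinct_factor := 1 - 2 / INR n.

(* A lower bound on every relative density; it stays above hn/(2m), which pays for
   the h distinct values chosen at a coordinate. *)
Definition slack k t := pattern_factor ^ k * eps - INR (t - k) * INR h / INR m.
(* A lower bound on the relative density of F_j after s gain steps of F_j; it
   would exceed 1 after too many of them. *)
Definition potential k s t := eps * pattern_factor ^ k * gain_factor ^ s * distinct_factor ^ t.

Definition dense_at t x (A : {set cube m n}) w := INR (m ^ (n - t)) * x <= INR (prefix_count A w t).

(* Every coordinate that is not a pattern coordinate is a gain step of some F_j,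
   counted in [s j]. *)
Definition sparse_invariant t k w Phi (s : 'I_h -> nat) :=
  [/\ (k <= l)%N, (k <= t)%N, partial_copy H t k w Phi, (t - k <= \sum_j s j)%N &
      forall j, dense_at t (slack k t) (F j) (w j) /\ dense_at t (potential k (s j) t) (F j) (w j)].

Lemma n_ge8 : (8 <= n)%N.
Proof. by move: large_n; rewrite /sparse_threshold; lia. Qed.

Lemma m_gt0 : (0 < m)%N.
Proof.
apply: ltn_INR; have := INR_leq h_gt0; have := INR_leq n_ge8; rewrite /=; nra.
Qed.

Lemma large_m_nat : (2 * h * n < m)%N.
Proof. by apply: ltn_INR; rewrite !mult_INR /=; have := pos_INR m; nra. Qed.

Lemma h_ge1 : 1 <= INR h.
Proof. exact: (INR_leq h_gt0). Qed.

Lemma M_gt0 : (0 < M)%N.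
Proof. by rewrite /pattern_rate; lia. Qed.

Lemma K_gt0 : (0 < K)%N.
Proof. by rewrite /gain_rate /pattern_rate; lia. Qed.

Lemma pattern_factorE : pattern_factor = 1 - / INR M.
Proof.
have M_pos : 0 < INR M := INR_ltn M_gt0; rewrite /pattern_factor INR_subn ?M_gt0 //=; field; lra.
Qed.

Lemma gain_factorE : gain_factor = 1 + / INR K.
Proof. have K_pos : 0 < INR K := INR_ltn K_gt0; rewrite /gain_factor plus_INR /=; field; lra. Qed.

Lemma pattern_factor_pow_ge k : (k <= l)%N -> 3 / 4 <= pattern_factor ^ k.
Proof.
move=> le_kl; have l_ge0 := pos_INR l.
have M_ge : 4 * (INR l + 1) <= INR M.
  have E4 : INR 4 = 4 by rewrite /=; lra.
  by rewrite /pattern_rate !mult_INR (S_INR l) E4; have := h_ge1; nra.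
rewrite pattern_factorE.
have kM : INR k * / INR M <= / 4.
  apply: (Rmult_le_reg_r (INR M)); first lra.
  by rewrite Rmult_assoc Rinv_l; [have := INR_leq le_kl; lra | lra].
apply: Rle_trans (one_sub_pow_ge k _); first lra.
split; [left; apply: Rinv_0_lt_compat; lra | rewrite -Rinv_1; apply: Rinv_le_contravar; lra].
Qed.

Lemma slack_lower k t : (k <= l)%N -> (t <= n)%N ->
  INR h * (INR (n - t) + INR n / 2) < INR m * slack k t.
Proof.
move=> le_kl le_tn; have m_pos : 0 < INR m := INR_ltn m_gt0.
have -> : INR m * slack k t = INR m * eps * pattern_factor ^ k - INR (t - k) * INR h.
  by rewrite /slack; field; lra.
have m_eps : 0 <= INR m * eps by nra.
have := Rmult_le_compat_l _ _ _ m_eps (pattern_factor_pow_ge le_kl).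
have : INR (t - k) * INR h <= INR t * INR h.
  by apply: Rmult_le_compat_r (pos_INR h) _; apply: INR_leq; lia.
rewrite (INR_subn le_tn); lra.
Qed.

Lemma dense_slack_count t k A w : (k <= l)%N -> (t < n)%N -> dense_at t (slack k t) A w ->
  (h * m ^ (n - t.+1) * n <= 2 * prefix_count A w t)%N.
Proof.
move=> le_kl lt_tn; rewrite /dense_at (expn_subS _ lt_tn) mult_INR => le_c.
have S_ge0 := pos_INR (m ^ (n - t.+1)).
have := Rmult_le_compat_l _ _ _ S_ge0 (Rlt_le _ _ (slack_lower le_kl (ltnW lt_tn))).
have := Rmult_le_pos _ _ S_ge0 (Rmult_le_pos _ _ (pos_INR h) (pos_INR (n - t))).
by move=> ? ?; apply: leq_INR; rewrite !mult_INR /=; lra.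
Qed.

Lemma pattern_factor_01 : 0 <= pattern_factor <= 1.
Proof.
have M_ge1 : 1 <= INR M := INR_leq M_gt0; rewrite pattern_factorE.
have : / INR M <= 1 by rewrite -Rinv_1; apply: Rinv_le_contravar; lra.
have : 0 < / INR M by apply: Rinv_0_lt_compat; lra.
lra.
Qed.

Lemma gain_factor_ge1 : 1 <= gain_factor.
Proof.
rewrite gain_factorE; have : 0 < / INR K by apply: Rinv_0_lt_compat; apply: (INR_ltn K_gt0).
lra.
Qed.

Lemma distinct_factor_01 : 0 <= distinct_factor <= 1.
Proof.
have n8 : 8 <= INR n by have := INR_leq n_ge8; rewrite /=; lra.
rewrite /distinct_factor; have : 0 < 2 / INR n by apply: Rdiv_lt_0_compat; lra.
have : 2 / INR n <= 1 by apply: (Rmult_le_reg_r (INR n)); [lra | field_simplify; lra].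
lra.
Qed.

Lemma potential_ge0 k s t : 0 <= potential k s t.
Proof.
have := pattern_factor_01; have := gain_factor_ge1; have := distinct_factor_01.
rewrite /potential => ? ? ?; repeat apply: Rmult_le_pos; try apply: pow_le; lra.
Qed.

Lemma dense_at_pattern k s t A w a : (t < n)%N ->
  ((M - 1) * prefix_count A w t <= M * m * prefix_count A (set_coord w t a) t.+1)%N ->
  dense_at t (slack k t) A w -> dense_at t (potential k s t) A w ->
  dense_at t.+1 (slack k.+1 t.+1) A (set_coord w t a) /\
  dense_at t.+1 (potential k.+1 s t.+1) A (set_coord w t a).
Proof.
move=> lt_tn rel; rewrite /dense_at (expn_subS _ lt_tn) => d_slack d_pot.
have [a0 a1] := pattern_factor_01; have [r0 r1] := distinct_factor_01.
split.
  apply: Rle_trans (scale_transfer m_gt0 M_gt0 rel d_slack); apply: Rmult_le_compat_l (pos_INR _) _.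
  have := Rle_mult_inv_pos _ _ (Rmult_le_pos _ _ (pos_INR (t - k)) (pos_INR h)) (INR_ltn m_gt0).
  by rewrite -/pattern_factor /slack subSS /=; nra.
apply: Rle_trans (scale_transfer m_gt0 M_gt0 rel d_pot); apply: Rmult_le_compat_l (pos_INR _) _.
have := potential_ge0 k s t; rewrite -/pattern_factor /potential /= => P0.
have := Rmult_le_pos _ _ a0 P0; nra.
Qed.

Lemma slack_succ k t : (k <= t)%N -> slack k t.+1 = slack k t - INR h / INR m.
Proof.
move=> le_kt; have m_pos : 0 < INR m := INR_ltn m_gt0.
by rewrite /slack (subSn le_kt) S_INR; field; lra.
Qed.

Lemma slack_ge0 k t : (k <= l)%N -> (t <= n)%N -> 0 <= slack k t.
Proof.
move=> le_kl le_tn; have m_pos : 0 < INR m := INR_ltn m_gt0.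
apply: (Rmult_le_reg_l (INR m)) => //; rewrite Rmult_0_r.
have := slack_lower le_kl le_tn; have := pos_INR (n - t); have := pos_INR n; have := pos_INR h.
nra.
Qed.

Lemma dense_at_gain k s t A w a : (k <= l)%N -> (k <= t)%N -> (t < n)%N ->
  ((K + 1) * prefix_count A w t <= K * m * prefix_count A (set_coord w t a) t.+1)%N ->
  dense_at t (slack k t) A w -> dense_at t (potential k s t) A w ->
  dense_at t.+1 (slack k t.+1) A (set_coord w t a) /\
  dense_at t.+1 (potential k s.+1 t.+1) A (set_coord w t a).
Proof.
move=> le_kl le_kt lt_tn rel; rewrite /dense_at (expn_subS _ lt_tn) => d_slack d_pot.
have b1 := gain_factor_ge1; have [r0 r1] := distinct_factor_01.
split.
  apply: Rle_trans (scale_transfer m_gt0 K_gt0 rel d_slack); apply: Rmult_le_compat_l (pos_INR _) _.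
  have := slack_ge0 le_kl (ltnW lt_tn); have := Rle_mult_inv_pos _ _ (pos_INR h) (INR_ltn m_gt0).
  rewrite -/gain_factor slack_succ //; nra.
apply: Rle_trans (scale_transfer m_gt0 K_gt0 rel d_pot); apply: Rmult_le_compat_l (pos_INR _) _.
have := potential_ge0 k s t; rewrite -/gain_factor /potential /= => P0.
have := Rmult_le_pos _ _ (Rle_trans _ _ _ Rle_0_1 b1) P0; nra.
Qed.

Lemma dense_at_distinct k s t A w a : (k <= l)%N -> (k <= t)%N -> (t < n)%N ->
  (prefix_count A w t <= m * prefix_count A (set_coord w t a) t.+1 + h * m ^ (n - t.+1))%N ->
  dense_at t (slack k t) A w -> dense_at t (potential k s t) A w ->
  dense_at t.+1 (slack k t.+1) A (set_coord w t a) /\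
  dense_at t.+1 (potential k s t.+1) A (set_coord w t a).
Proof.
move=> le_kl le_kt lt_tn rel d_slack d_pot.
have large_c := dense_slack_count le_kl lt_tn d_slack.
move: d_slack d_pot; rewrite /dense_at (expn_subS _ lt_tn) => d_slack d_pot; split.
  by rewrite slack_succ //; apply: sub_transfer m_gt0 rel d_slack.
have n_ge2 : (2 <= n)%N by have := n_ge8; lia.
apply: Rle_trans (rel_sub_transfer m_gt0 n_ge2 rel large_c d_pot).
by apply: Req_le; rewrite /potential /distinct_factor /=; ring.
Qed.

Lemma gain_exponent_large s : (n < h * s + l)%N ->
  ln (/ eps) + 5 < INR s * (/ INR K / 2).
Proof.
move=> /INR_ltn; rewrite plus_INR mult_INR => short_n.
have K_pos : 0 < INR K := INR_ltn K_gt0.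
have large_n' : 2 * INR l + 20 * (INR h * INR K) + 8 <= INR n.
  have := INR_leq large_n; rewrite /sparse_threshold 2!plus_INR (mult_INR (20 * h)) !(mult_INR _ l).
  by rewrite (mult_INR 20 h) /=; lra.
have long_n' : 4 * (INR h * INR K) * ln (/ eps) < INR n.
  by have := long_n; rewrite (mult_INR (4 * h)) (mult_INR 4 h) /=; lra.
apply: (Rmult_lt_reg_l (2 * INR h * INR K)); first by have := h_ge1; nra.
have -> : 2 * INR h * INR K * (INR s * (/ INR K / 2)) = INR h * INR s by field; lra.
lra.
Qed.

Lemma potential_gt1 k s : (k <= l)%N -> (n < h * s + l)%N -> 1 < potential k s n.
Proof.
move=> le_kl short_n; set L := ln (/ eps); set Y := INR s * (/ INR K / 2).
have K_ge1 : 1 <= INR K := INR_leq K_gt0.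
have n8 : 8 <= INR n by have := INR_leq n_ge8; rewrite /=; lra.
have eps_exp : exp (- L) = eps.
  by rewrite exp_Ropp exp_ln ?Rinv_inv //; apply: Rinv_0_lt_compat; lra.
have pattern_exp : exp (-1) <= pattern_factor ^ k.
  apply: Rle_trans (pattern_factor_pow_ge le_kl); rewrite exp_Ropp.
  have := exp_ineq1_le 1; have := exp_pos 1; move: (exp 1) => e e_gt0 e_ge2.
  by apply: (Rmult_le_reg_l e) => //; rewrite Rinv_r; lra.
have gain_exp : exp Y <= gain_factor ^ s.
  apply: exp_INR_mul_le; rewrite gain_factorE; apply: exp_half_le_one_add.
  split; [left; apply: Rinv_0_lt_compat | rewrite -Rinv_1; apply: Rinv_le_contravar]; lra.
have distinct_exp : exp (-4) <= distinct_factor ^ n.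
  have -> : -4 = INR n * - (2 * (2 / INR n)) by field; lra.
  apply: exp_INR_mul_le; apply: exp_le_one_sub.
  split; [left; apply: Rdiv_lt_0_compat | apply: (Rmult_le_reg_r (INR n)); [|field_simplify]]; lra.
have : exp (- L + -1 + Y + -4) <= potential k s n.
  rewrite !exp_plus eps_exp /potential.
  repeat apply: Rmult_le_compat => //; try (left; apply: exp_pos); try lra;
    repeat apply: Rmult_le_pos; try (left; apply: exp_pos); lra.
apply: Rlt_le_trans; rewrite -exp_0; apply: exp_increasing.
have := gain_exponent_large short_n; rewrite -/L -/Y; lra.
Qed.

Definition pattern_values t w := [set a : 'I_m | [forall j,
  (M - 1) * prefix_count (F j) (w j) t <= M * m * prefix_count (F j) (set_coord (w j) t a) t.+1]%N].

Lemma sparse_pattern_step t k w Phi s : (t < n)%N -> (k < l)%N ->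
  (h <= #|pattern_values t w|)%N -> sparse_invariant t k w Phi s ->
  exists w' Phi', sparse_invariant t.+1 k.+1 w' Phi' s.
Proof.
move=> lt_tn lt_kl large_G [_ le_kt copy_w sum_s dense_w].
have [a [Phi' [aG copy']]] := partial_copy_pattern lt_tn lt_kl large_G copy_w.
exists (fun j => set_coord (w j) t (a j)), Phi'; split; rewrite ?subSS //.
move=> j; have [d_slack d_pot] := dense_w j; apply: dense_at_pattern lt_tn _ d_slack d_pot.
by have := aG j; rewrite inE => /forallP.
Qed.

Lemma gain_value (A : {set cube m n}) w t : (t < n)%N -> (0 < prefix_count A w t)%N ->
  (m < h * #|[set a | ~~ ((M - 1) * prefix_count A w t
                           <= M * m * prefix_count A (set_coord w t a) t.+1)]| + h)%N ->
  exists b, ((K + 1) * prefix_count A w t <= K * m * prefix_count A (set_coord w t b) t.+1)%N.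
Proof.
move=> lt_tn c_gt0 many_bad; pose cc a := prefix_count A (set_coord w t a) t.+1.
have [b _ max_b] := @arg_maxnP _ (Ordinal m_gt0) xpredT cc isT.
exists b; have := max_gain (T := 'I_m) (k := h) (c := cc) M_gt0 (fun a => max_b a isT).
rewrite !card_ord -(prefix_count_split _ _ lt_tn) /gain_rate; apply=> //.
by have := large_m_nat; have := n_ge8; nia.
Qed.

Lemma sparse_gain_step t k w Phi s : (t < n)%N -> (#|pattern_values t w| < h)%N ->
  sparse_invariant t k w Phi s -> exists w' s', sparse_invariant t.+1 k w' Phi s'.
Proof.
move=> lt_tn few_G [le_kl le_kt copy_w sum_s dense_w].
set S := (m ^ (n - t.+1))%N; pose c j := prefix_count (F j) (w j) t.
have large_c j : (h * S * n <= 2 * c j)%N := dense_slack_count le_kl lt_tn (dense_w j).1.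
have S_gt0 : (0 < S)%N by rewrite expn_gt0 m_gt0.
have hS_c j : (h * S <= c j)%N by have := large_c j; have := n_ge8; nia.
have [|j0 many_bad] := exists_many_bad (T := 'I_m) (P := fun j a =>
  (M - 1) * c j <= M * m * prefix_count (F j) (set_coord (w j) t a) t.+1)%N.
  by rewrite card_ord.
rewrite !card_ord in many_bad.
have hS_gt0 : (0 < h * S)%N by rewrite muln_gt0 h_gt0 S_gt0.
have [b gain_b] := gain_value lt_tn (leq_trans hS_gt0 (hS_c j0)) many_bad.
have [|v [inj_v v_j0 vA]] := distinct_representatives_with (A := fun j =>
  [set a | c j <= m * prefix_count (F j) (set_coord (w j) t a) t.+1 + h * S]%N) j0 b.
  move=> j; apply: prefix_count_good_values => //; last exact: hS_c.
  by have := large_m_nat; have := n_ge8; nia.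
exists (fun j => set_coord (w j) t (v j)), (fun j => s j + (j == j0))%N.
split => //; [lia | exact: partial_copy_distinct | |].
  have one_j0 : (\sum_j (j == j0) = 1)%N by rewrite (bigD1 j0) //= eqxx big1 // => j /negbTE ->.
  by rewrite big_split /= one_j0; apply: leq_trans (leq_add sum_s (leqnn 1)); lia.
move=> j; have [d_slack d_pot] := dense_w j; case: eqP => [eq_j|/eqP ne_j].
  by subst j; rewrite v_j0 addn1; apply: dense_at_gain.
rewrite addn0; apply: dense_at_distinct => //.
by have := vA j ne_j; rewrite inE.
Qed.

Lemma sparse_invariant_cross_contain t w Phi s : (t <= n)%N ->
  sparse_invariant t l w Phi s -> cross_contain H F.
Proof.
move=> le_tn [_ _ copy_w _ dense_w].
apply: (distinct_completion _ le_tn copy_w) => [|j].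
  by have := large_m_nat; have := n_ge8; nia.
have [+ _] := dense_w j; rewrite /dense_at => d_slack.
have P_pos : 0 < INR (m ^ (n - t)) by apply: (INR_ltn (a := 0)); rewrite expn_gt0 m_gt0.
have := Rmult_lt_compat_l _ _ _ P_pos (slack_lower (leqnn l) le_tn).
have := Rmult_le_compat_l _ _ _ (pos_INR m) d_slack.
have := Rmult_le_pos _ _ (Rlt_le _ _ P_pos) (Rmult_le_pos _ _ (pos_INR h) (pos_INR n)).
by move=> ? ? ?; apply: ltn_INR; rewrite !mult_INR; lra.
Qed.

Lemma sparse_invariant_end k w Phi s : (k < l)%N -> ~ sparse_invariant n k w Phi s.
Proof.
move=> lt_kl [_ _ _ sum_s dense_w].
have [j short_n] : exists j, (n < h * s j + l)%N.
  apply/existsP; apply: contraLR sum_s; rewrite negb_exists -ltnNge => /forallP long_n'.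
  have : (h * \sum_j s j <= h * (n - l))%N.
    rewrite big_distrr /=; apply: leq_trans (_ : _ <= \sum_(j < h) (n - l))%N _.
      apply: leq_sum => j _.
      by have := long_n' j; rewrite -leqNgt; lia.
    by rewrite sum_nat_const card_ord.
  by rewrite leq_pmul2l //; lia.
have := (dense_w j).2; rewrite /dense_at subnn expn0 Rmult_1_l.
have := prefix_count_le (F j) (w j) (leqnn n); rewrite subnn expn0 => /INR_leq /= le1.
have := potential_gt1 (ltnW lt_kl) short_n; lra.
Qed.

Lemma sparse_regime : cross_contain H F.
Proof.
suff /(_ n 0%N 0%N (fun _ => [ffun _ => Ordinal m_gt0]) (widen_ord le_ln) (fun _ => 0%N)) :
    forall d t k w Phi s, (t + d = n)%N -> sparse_invariant t k w Phi s -> cross_contain H F.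
  apply=> //; split; rewrite ?sum_nat_const ?muln0 // => j.
  have -> : slack 0 0 = eps by rewrite /slack /= Rmult_0_l /Rdiv Rmult_0_l; ring.
  have -> : potential 0 0 0 = eps by rewrite /potential /=; ring.
  by rewrite /dense_at subn0 prefix_count0; split; apply: dense_F.
elim=> [|d IH] t k w Phi s def_t inv; have [le_kl _ _ _ _] := inv;
    (have [lt_kl|ge_kl] := ltnP k l; last first);
    try by rewrite (_ : k = l) in inv; [apply: sparse_invariant_cross_contain inv; lia | lia].
  by rewrite (_ : t = n) in inv; [case: (sparse_invariant_end lt_kl inv) | lia].
have lt_tn : (t < n)%N by lia.
case: (leqP h #|pattern_values t w|) => [large_G|few_G].
  have [w' [Phi' inv']] := sparse_pattern_step lt_tn lt_kl large_G inv.
  by apply: IH inv'; lia.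
have [w' [s' inv']] := sparse_gain_step lt_tn few_G inv.
by apply: IH inv'; lia.
Qed.

End SparseRegime.

Lemma one_sub_le_ln_inv (eps : R) : 0 < eps -> 1 - eps <= ln (/ eps).
Proof.
move=> eps_gt0; have := exp_ineq1_le (- ln (/ eps)).
by rewrite exp_Ropp exp_ln ?Rinv_inv; [lra | apply: Rinv_0_lt_compat].
Qed.

Lemma card_gt_of_mu m n (F : {set cube m n}) eps : (0 < m)%N -> mu F > eps ->
  INR (m ^ n) * eps < INR #|F|.
Proof.
move=> m_gt0; rewrite /mu natpow_expn.
have P_pos : 0 < INR (m ^ n) by apply: (INR_ltn (a := 0)); rewrite expn_gt0 m_gt0.
move=> lt_eps; apply: (Rmult_lt_reg_r (/ INR (m ^ n))); first exact: Rinv_0_lt_compat.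
by rewrite Rmult_comm -Rmult_assoc Rinv_l ?Rmult_1_l; lra.
Qed.

Lemma cross_contain_small_n l h m n (H : configuration l h) (F : 'I_h -> {set cube m n}) eps :
  0 < eps < 1 -> (forall j, INR (m ^ n) * eps < INR #|F j|) -> (0 < n)%N -> (l <= n)%N ->
  (n < sparse_threshold h l)%N -> INR (cross_constant h l) * ln (/ eps) < INR n ->
  (2 * h * n < m)%N -> cross_contain H F.
Proof.
move=> eps01 large_F n_gt0 le_ln small_n long_n large_m.
apply: dense_regime => // j.
set P := ((2 * h) ^ l)%N; set N := sparse_threshold h l.
have P_small : INR P * (1 - eps) <= / 2.
  have L_ge := one_sub_le_ln_inv (proj1 eps01); set L := ln (/ eps) in L_ge long_n *.
  have le_C : 2 * INR N * INR P * L <= INR (cross_constant h l) * L.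
    rewrite -(mult_INR 2 N) -mult_INR; apply: Rmult_le_compat_r; first lra.
    by apply: INR_leq; rewrite /cross_constant; lia.
  have N_pos : 0 < INR N by apply: (INR_ltn (a := 0)); rewrite /N /sparse_threshold; lia.
  have : INR P * L < / 2.
    apply: (Rmult_lt_reg_l (2 * INR N)); first lra.
    have -> : 2 * INR N * / 2 = INR N by field.
    by have := INR_ltn small_n; rewrite -/N; lra.
  by have := Rmult_le_compat_l _ _ _ (pos_INR P) L_ge; lra.
case: (leqP #|F j| (m ^ n)) => [le_F|/ltnW]; last by rewrite -subn_eq0 => /eqP ->; rewrite muln0.
apply: leq_INR; rewrite !mult_INR (INR_subn le_F) /=.
have := Rmult_le_compat_l _ _ _ (pos_INR (m ^ n)) P_small.
have : INR P * (INR (m ^ n) - INR #|F j|) <= INR P * (INR (m ^ n) * (1 - eps)).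
  by apply: Rmult_le_compat_l (pos_INR P) _; have := large_F j; lra.
by move: (INR (m ^ n)) (INR #|F j|) (INR P) => M f p; lra.
Qed.

Lemma cross_contain_large_n l h m n (H : configuration l h) (F : 'I_h -> {set cube m n}) eps :
  0 < eps < 1 -> (0 < h)%N -> (forall j, INR (m ^ n) * eps < INR #|F j|) -> (l <= n)%N ->
  (sparse_threshold h l <= n)%N -> INR (cross_constant h l) * ln (/ eps) < INR n ->
  2 * INR h * INR n < INR m * eps -> cross_contain H F.
Proof.
move=> eps01 h_gt0 large_F le_ln large_n long_n large_m.
apply: (@sparse_regime l h m n H F eps) => // [|j]; last exact: Rlt_le.
apply: Rle_lt_trans long_n; apply: Rmult_le_compat_r.
  by have := one_sub_le_ln_inv (proj1 eps01); lra.
by apply: INR_leq; rewrite /cross_constant; lia.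
Qed.

Theorem lemma7p3 (l h : nat) :
  exists C : R, (0 < C)%R /\
    forall (H : configuration l h) (eps : R) (m n : nat)
           (F : 'I_h -> {set cube m n}),
      (0 < eps < 1)%R ->
      (forall i, mu (F i) > eps)%R ->
      (l <= n)%N ->
      (INR n > C * ln (/ eps))%R ->
      (INR m > 2 * INR h * INR n / eps)%R ->
      cross_contain H F.
Proof.
exists (INR (cross_constant h l)); split; first exact: (INR_ltn (a := 0)).
move=> H eps m n F eps01 mu_F le_ln long_n large_m.
have large_m' : 2 * INR h * INR n < INR m * eps.
  by apply: (Rmult_lt_reg_r (/ eps)); [apply: Rinv_0_lt_compat | field_simplify]; lra.
have large_m_nat : (2 * h * n < m)%N.
  by apply: ltn_INR; rewrite !mult_INR; have := pos_INR m; have : INR 2 = 2 by []; nra.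
have large_F j := card_gt_of_mu (leq_ltn_trans (leq0n _) large_m_nat) (mu_F j).
have n_gt0 : (0 < n)%N.
  apply: (ltn_INR (a := 0)) => /=; have := one_sub_le_ln_inv (proj1 eps01).
  by have := pos_INR (cross_constant h l); nra.
have [h0|h_gt0] := posnP h; first by subst h; apply: dense_regime => // -[].
have [small_n|large_n] := ltnP n (sparse_threshold h l).
  exact: (cross_contain_small_n H eps01 large_F n_gt0 le_ln small_n long_n).
exact: (cross_contain_large_n H eps01 h_gt0 large_F le_ln large_n long_n large_m').
Qed.
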